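(* Let $\mathcal{D}$ be an admissible set of domains on a topological space $X$. Then the partially ordered commutative ring $\mathscr{C}_\approx(\mathcal{D})$ is strongly localizable.
   Context: An admissible set of domains on $X$ is a set $\mathcal{D}$ of open subsets of $X$ with $X\in\mathcal{D}$ and $A\cap B\in\mathcal{D}$ for all $A,B\in\mathcal{D}$. On $\bigcup_{A\in\mathcal{D}}\mathscr{C}(A)$ ($\mathscr{C}(A)$ = continuous real-valued functions on $A$) define $f+g$ and $fg$ pointwise on $\operatorname{dom}f\cap\operatorname{dom}g$; $f\approx g$ iff there is $A\in\mathcal{D}$ with $A\subseteq\operatorname{dom}f\cap\operatorname{dom}g$ and $f|_A=g|_A$. $\mathscr{C}_\approx(\mathcal{D})$ is the quotient commutative ring, with order $[f]\le[g]$ iff there is $A\in\mathcal{D}$, $A\subseteq\operatorname{dom}f\cap\operatorname{dom}g$, with $f|_A\le g|_A$ pointwise. For a commutative ring $R$ with translation-invariant partial order and positive cone $R^+$: $\mathrm{Loc}(R)$ is the set of $s\in1+R^+$ such that $rs\in R^+$ implies $r\in R^+$ for all $r\in R$; $R$ is strongly localizable if $r^2\in R^+$ for all $r$ and $\mathrm{Loc}(R)=1+R^+$. *)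

From HB Require Import structures.
From mathcomp Require Import all_boot all_order all_algebra.
From mathcomp Require Import all_classical all_reals.
From mathcomp Require Import topology Rstruct Rstruct_topology.
From Stdlib Require Import Reals.
Set Implicit Arguments. Unset Strict Implicit. Unset Printing Implicit Defensive.
Import Order.TTheory GRing.Theory Num.Theory.
Local Open Scope classical_set_scope.
Local Open Scope ring_scope.

Definition admissible (X : topologicalType) (D : set (set X)) : Prop :=
  (forall A, D A -> open A) /\ D setT /\
  (forall A B, D A -> D B -> D (A `&` B)).

(* A partial function: a domain together with a (total) function;
   only its values on the domain matter. *)
Record pfun (X : Type) := PFun { pdom : set X; pfn : X -> Rdefinitions.R }.

(* f is an element of  \bigcup_{A in D} C(A). *)
Definition inC (X : topologicalType) (D : set (set X)) (f : pfun X) : Prop :=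
  D (pdom f) /\ {within pdom f, continuous (pfn f)}.

Definition padd X (f g : pfun X) : pfun X :=
  PFun (pdom f `&` pdom g) (fun x => pfn f x + pfn g x).
Definition pmul X (f g : pfun X) : pfun X :=
  PFun (pdom f `&` pdom g) (fun x => pfn f x * pfn g x).
Definition pconst X (c : Rdefinitions.R) : pfun X := PFun setT (fun _ => c).

Definition peqv X (D : set (set X)) (f g : pfun X) : Prop :=
  exists A, D A /\ A `<=` pdom f `&` pdom g /\ (forall x, A x -> pfn f x = pfn g x).

Definition ple X (D : set (set X)) (f g : pfun X) : Prop :=
  exists A, D A /\ A `<=` pdom f `&` pdom g /\ (forall x, A x -> pfn f x <= pfn g x).

Definition ppos (X : topologicalType) (D : set (set X)) (r : pfun X) : Prop := ple D (pconst X 0) r.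

Definition one_plus_pos (X : topologicalType) (D : set (set X)) (s : pfun X) : Prop :=
  exists p, inC D p /\ ppos D p /\ peqv D s (padd (pconst X 1) p).

Definition inLoc (X : topologicalType) (D : set (set X)) (s : pfun X) : Prop :=
  one_plus_pos D s /\
  (forall r, inC D r -> ppos D (pmul r s) -> ppos D r).

Definition strongly_localizable (X : topologicalType) (D : set (set X)) : Prop :=
  (forall r, inC D r -> ppos D (pmul r r)) /\
  (forall s, inC D s -> (inLoc D s <-> one_plus_pos D s)).

From mathcomp Require Import all_boot all_order all_algebra.
From mathcomp Require Import all_classical all_reals topology Rstruct.
Import Order.TTheory GRing.Theory Num.Theory.
Local Open Scope classical_set_scope.
Local Open Scope ring_scope.

(* Squares are pointwise nonnegative.  A class [1 + p] with [p >= 0] has a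
   representative that is strictly positive on some domain, and there
   multiplication by it preserves and reflects nonnegativity. *)

Section PartialFunctionOrder.
Variables (X : topologicalType) (D : set (set X)).
Hypothesis DI : forall A B, D A -> D B -> D (A `&` B).

Definition pspos (s : pfun X) : Prop :=
  exists A, D A /\ A `<=` pdom s /\ (forall x, A x -> 0 < pfn s x).

Lemma ppos_mul_self (r : pfun X) : D (pdom r) -> ppos D (pmul r r).
Proof.
move=> Dr; exists (pdom r); split=> //; split=> [x rx //|x _ /=].
by rewrite R0E -expr2 sqr_ge0.
Qed.

Lemma one_plus_pos_pspos (s : pfun X) : one_plus_pos D s -> pspos s.
Proof.
case=> p [_ [[B [DB [_ p_ge0]]] [A [DA [sA s_eq]]]]].
exists (A `&` B); split; first exact: DI.
split=> [x [Ax _]|x [Ax Bx]]; first by case: (sA x Ax).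
have := p_ge0 x Bx; rewrite s_eq //= R0E R1E => {}p_ge0.
by rewrite ltr_pwDl.
Qed.

Lemma ppos_mulr_pspos (r s : pfun X) :
  pspos s -> ppos D (pmul r s) -> ppos D r.
Proof.
case=> [A [DA [_ s_gt0]]] [E [DE [sE rs_ge0]]].
exists (A `&` E); split; first exact: DI.
split=> [x [_ Ex]|x [Ax Ex]]; first by case: (sE x Ex) => _ [].
have := rs_ge0 x Ex; rewrite /= R0E => {}rs_ge0.
by rewrite -(pmulr_lge0 _ (s_gt0 x Ax)).
Qed.

End PartialFunctionOrder.

Theorem proposition10 (X : topologicalType) (D : set (set X)) :
  admissible D -> strongly_localizable D.
Proof.
case=> _ [_ DI]; split=> [r [Dr _]|s _]; first exact: ppos_mul_self.
split=> [[] //|s_1pos]; split=> // r _.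
exact/ppos_mulr_pspos/one_plus_pos_pspos.
Qed.
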